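(* Let $C\subset\mathbb R^3$ be an embedded curve (closed or non-closed) with nowhere vanishing curvature, and let $F\in\mathcal D(|C|)$ be a normal form. Then $F(\Omega_\epsilon)\cap\check F(\Omega_\epsilon)=C$ for all sufficiently small $\epsilon>0$. Moreover, the origami map $\Phi_F$ has no self-intersections (on $\Omega_\epsilon$ for sufficiently small $\epsilon>0$).
   Context: $C$ has length $l>0$ and an orientation; $-C$ is the oppositely oriented curve. $J=[-l/2,l/2]$ if $C$ is non-closed, $J=\mathbb R/l\mathbb Z$ if closed; $\Omega_\epsilon:=J\times(-\epsilon,\epsilon)$. A developable strip along $C$ is the germ of a $C^\infty$ embedding $f(u,v)=f(u,0)+v\,\xi_f(u)$ with $\mathbf c_f(u)=f(u,0)$ parametrizing $C$, $\xi_f$ a unit vector field, and zero Gaussian curvature; with the Frenet frame $(\mathbf e,\mathbf n,\mathbf b)$ of $\mathbf c_f$ write $\xi_f=\cos\beta_f\,\mathbf e+\sin\beta_f(\cos\alpha_f\,\mathbf n+\sin\alpha_f\,\mathbf b)$. $\mathcal D(C)$: strips with $\mathbf c_f$ inducing the orientation of $C$ and $0<|\cos\alpha_f|<1$, normalized so $0<|\alpha_f|<\pi/2$ (first angular function), $0<\beta_f<\pi$. $\mathcal D(|C|)=\mathcal D(C)\cup\mathcal D(-C)$. A normal form is such a strip $F(s,v)$ defined near $J\times\{0\}$ with $s\mapsto F(s,0)$ an arc-length parametrization of $C$; it is determined by this parametrization and its first angular function (zero Gaussian curvature being equivalent to $\cot\beta_F=(\alpha_F'+\tau)/(\kappa\sin\alpha_F)$).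 The dual $\check F$ is the normal form with $\check F(s,0)=F(s,0)$ and first angular function $-\alpha_F$. The origami map is $\Phi_F(s,v)=F(s,v)$ for $v\ge0$ and $\Phi_F(s,v)=\check F(s,v)$ for $v<0$. *)

From HB Require Import structures.
From mathcomp Require Import all_boot all_order all_algebra.
From mathcomp Require Import all_classical all_reals all_analysis.
Set Implicit Arguments. Unset Strict Implicit. Unset Printing Implicit Defensive.
Import Order.TTheory GRing.Theory Num.Theory.
Import numFieldNormedType.Exports.
Local Open Scope classical_set_scope.
Local Open Scope ring_scope.

Section Defs.
Variable R : realType.
Notation V := 'rV[R]_3.

(* Euclidean structure of R^3 (the library norm on matrices is the sup norm). *)
Definition dot (u w : V) : R := \sum_(i < 3) u 0 i * w 0 i.
Definition enorm (u : V) : R := Num.sqrt (dot u u).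
Definition cross (u w : V) : V :=
  \row_(i < 3) (if i == 0 :> nat then u 0 1 * w 0 2 - u 0 2 * w 0 1
               else if i == 1 :> nat then u 0 2 * w 0 0 - u 0 0 * w 0 2
               else u 0 0 * w 0 1 - u 0 1 * w 0 0).

Definition smooth_on {W : normedModType R} (U : set R) (f : R -> W) : Prop :=
  forall (n : nat) (s : R), U s -> derivable (iter n (@derive1 R W) f) s 1.

(* Frenet apparatus of an arc-length parametrized curve c. *)
Definition curvature (c : R -> V) (s : R) : R := enorm (derive1 (derive1 c) s).
Definition tangent (c : R -> V) (s : R) : V := derive1 c s.
Definition pnormal (c : R -> V) (s : R) : V := (curvature c s)^-1 *: derive1 (derive1 c) s.
Definition binormal (c : R -> V) (s : R) : V := cross (tangent c s) (pnormal c s).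
Definition torsion (c : R -> V) (s : R) : R :=
  dot (derive1 (pnormal c) s) (binormal c s).

(* Second angular function determined by the first one [alpha] through the
   developability condition cot beta = (alpha' + tau)/(kappa sin alpha),
   0 < beta < pi (cot (pi/2 - atan x) = x). *)
Definition beta_of (c : R -> V) (alpha : R -> R) (s : R) : R :=
  pi / 2 - atan ((derive1 alpha s + torsion c s) / (curvature c s * sin (alpha s))).

Definition ruling (c : R -> V) (alpha : R -> R) (s : R) : V :=
  cos (beta_of c alpha s) *: tangent c s
  + sin (beta_of c alpha s) *: (cos (alpha s) *: pnormal c s
                                + sin (alpha s) *: binormal c s).
Definition normal_form (c : R -> V) (alpha : R -> R) (s v : R) : V :=
  c s + v *: ruling c alpha s.

Definition dual_form (c : R -> V) (alpha : R -> R) : R -> R -> V :=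
  normal_form c (fun s => - alpha s).

Definition origami (c : R -> V) (alpha : R -> R) (s v : R) : V :=
  if 0 <= v then normal_form c alpha s v else dual_form c alpha s v.

(* Parameter domain J: R (standing for R/lZ) if closed, [-l/2,l/2] otherwise. *)
Definition Jset (closed : bool) (l : R) : set R :=
  if closed then setT else `[- (l / 2), l / 2]%classic.
Definition eqJ (closed : bool) (l : R) (s s' : R) : Prop :=
  if closed then exists k : int, s' = s + k%:~R * l else s = s'.
Definition Omega (closed : bool) (l eps : R) : set (R * R) :=
  [set p | Jset closed l p.1 /\ - eps < p.2 < eps].

Definition curve_data (closed : bool) (l : R) (c : R -> V) (alpha : R -> R)
  : Prop :=
  0 < l /\
  (if closed then
     (forall s, c (s + l) = c s /\ alpha (s + l) = alpha s) /\
     {in `[0, l[%classic &, injective c}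
   else {in `[- (l / 2), l / 2]%classic &, injective c}) /\
  exists delta : R, 0 < delta /\
   let U := if closed then setT
            else `]- (l / 2) - delta, l / 2 + delta[%classic in
   smooth_on U c /\ smooth_on U alpha /\
   (forall s, U s ->
      enorm (derive1 c s) = 1 /\ 0 < curvature c s /\
      0 < `|alpha s| < pi / 2).

Definition embedding_germ (closed : bool) (l : R) (F : R -> R -> V) : Prop :=
  exists eps0 : R, 0 < eps0 /\
   (forall p q, Omega closed l eps0 p -> Omega closed l eps0 q ->
      F p.1 p.2 = F q.1 q.2 -> eqJ closed l p.1 q.1 /\ p.2 = q.2) /\
   (forall p, Omega closed l eps0 p -> forall a b : R,
      a *: derive1 (fun s => F s p.2) p.1 + b *: derive1 (F p.1) p.2 = 0 ->
      a = 0 /\ b = 0).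

End Defs.

From HB Require Import structures.
From mathcomp Require Import all_boot all_order all_algebra.
From mathcomp Require Import all_classical all_reals all_analysis.
From mathcomp Require Import ring lra.
Import Order.TTheory GRing.Theory Num.Theory.
Import numFieldNormedType.Exports.
Local Open Scope classical_set_scope.
Local Open Scope ring_scope.
Set Implicit Arguments. Unset Strict Implicit. Unset Printing Implicit Defensive.

(* The rulings [xi] of [F] and [eta] of its dual [F'] satisfy
   det (tangent, xi, eta) = -2 sin(beta) sin(beta') sin(alpha) cos(alpha),
   which is nonzero because 0 < |alpha| < pi/2: near every point of C the two
   sheets are transversal. As the curve is C^1 and the rulings are locally
   Lipschitz, a first-order estimate shows that near any two parameters with
   the same image point, F(s,v) = F'(t,w) forces v = w = 0 and
   F'(s,v) = F'(t,w) forces s = t and v = w. Compactness of J x J (of [0,l]^2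
   for closed curves, using periodicity) makes these neighbourhoods uniform,
   and together with the embedding property of F this gives both claims. *)

Section MeanValue.
Variable R : realType.

Lemma continuous_ball (W : normedModType R) (g : R -> W) t0 e :
  {for t0, continuous g} -> 0 < e ->
  exists2 r : R, 0 < r & forall x, `|x - t0| < r -> `|g x - g t0| < e.
Proof.
move=> /cvgrPdist_lt gt0 /gt0 /nbhs_ballP[r r0 gr]; exists r => // x xr.
by rewrite distrC; apply: gr; rewrite /ball /= distrC.
Qed.

Lemma derivable1_continuous (W : normedModType R) (f : R -> W) x :
  derivable f x 1 -> {for x, continuous f}.
Proof. by move=> /derivable1_diffP/differentiable_continuous. Qed.

Lemma MVT_ball (g dg : R -> R) (t0 r s t : R) :
  (forall x, `|x - t0| < r -> is_derive x 1 g (dg x)) ->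
  `|s - t0| < r -> `|t - t0| < r ->
  exists2 th, `|th - t0| < r & g s - g t = dg th * (s - t).
Proof.
move=> D; wlog st : s t / t <= s => [hw hs ht|].
  have [/hw|/ltW ts] := leP t s; first exact.
  have [th thr E] := hw _ _ ts ht hs.
  by exists th => //; rewrite -opprB E -mulrN opprB.
move=> hs ht; have inb x : t <= x <= s -> `|x - t0| < r.
  by move: hs ht; rewrite !ltr_norml; lra.
have D1 x : x \in `]t, s[ -> is_derive x 1 g (dg x).
  by rewrite in_itv /= => /andP[x1 x2]; apply: D; rewrite inb // !ltW.
have C : {within `[t, s], continuous g}.
  by apply: derivable_within_continuous => x; rewrite in_itv /= => /inb /D[].
have [th] := MVT_segment st D1 C; rewrite in_itv /= => /inb thr ->.
by exists th.
Qed.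

Lemma derive_le1_lipschitz (g dg : R -> R) :
  (forall x : R, is_derive x 1 g (dg x)) -> (forall x, `|dg x| <= 1) ->
  forall x y, `|g x - g y| <= `|x - y|.
Proof.
move=> D B x y; have xx : `|x - x| < `|x - y| + 1 by rewrite subrr normr0 ltr_wpDl.
have [|th _ ->] := @MVT_ball g dg x (`|x - y| + 1) x y (fun z _ => D z) xx.
  by rewrite distrC ltrDl.
by rewrite normrM ler_piMl.
Qed.

Lemma sin_lipschitz (x y : R) : `|sin x - sin y| <= `|x - y|.
Proof.
by apply: (derive_le1_lipschitz (dg := cos)) => // z; rewrite ler_norml cos_geN1 cos_le1.
Qed.

Lemma cos_lipschitz (x y : R) : `|cos x - cos y| <= `|x - y|.
Proof.
apply: (derive_le1_lipschitz (dg := fun z => - sin z)) => // z.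
by rewrite normrN ler_norml sin_geN1 sin_le1.
Qed.

Lemma atan_lipschitz (x y : R) : `|atan x - atan y| <= `|x - y|.
Proof.
apply: (derive_le1_lipschitz (dg := fun z => (1 + z ^+ 2)^-1)) => // z.
have z1 : 1 <= 1 + z ^+ 2 by rewrite lerDl sqr_ge0.
by rewrite ger0_norm ?invr_ge0 ?(le_trans ler01) // invf_le1 // (lt_le_trans ltr01).
Qed.

Lemma strict_derive_near (f df : R -> R) (t0 r e : R) :
  0 < r -> (forall x, `|x - t0| < r -> is_derive x 1 f (df x)) ->
  {for t0, continuous df} -> 0 < e ->
  exists2 d : R, 0 < d & forall s t, `|s - t0| < d -> `|t - t0| < d ->
    `|f s - f t - (s - t) * df t0| <= e * `|s - t|.
Proof.
move=> r0 D dft0 e0; have [d d0 dfd] := continuous_ball dft0 e0.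
exists (Num.min r d) => [|s t]; first by rewrite lt_min r0 d0.
have D' x : `|x - t0| < Num.min r d ->
    is_derive x 1 (fun y => f y - y * df t0) (df x - df t0).
  rewrite lt_min => /andP[/D fx _].
  have -> : (fun y => f y - y * df t0) = f - df t0 \*: id.
    by apply/funext => y; rewrite /= mulrC.
  apply: is_derive_eq (is_deriveB fx (is_deriveZ (df t0) (is_derive_id x 1))) _.
  by rewrite [_ *: _]mulr1.
move=> hs ht; have [th] := MVT_ball D' hs ht.
rewrite lt_min => /andP[_ /dfd/ltW thd] /= E.
have -> : f s - f t - (s - t) * df t0 = f s - s * df t0 - (f t - t * df t0) by ring.
by rewrite E normrM ler_wpM2r.
Qed.

End MeanValue.

Section Coordinates.
Variable R : realType.
Notation V := 'rV[R]_3.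

Lemma ord3P (i : 'I_3) : [\/ i = 0, i = 1 | i = 2].
Proof.
by case: i => -[|[|[|//]]] ?; [constructor 1|constructor 2|constructor 3];
  apply: val_inj.
Qed.

Lemma dotE (u w : V) : dot u w = u 0 0 * w 0 0 + u 0 1 * w 0 1 + u 0 2 * w 0 2.
Proof.
rewrite /dot !big_ord_recr big_ord0 /= add0r.
by congr (_ * _ + _ * _ + _ * _); congr (_ _ _); apply: val_inj.
Qed.

Lemma cross0 (u w : V) : cross u w 0 0 = u 0 1 * w 0 2 - u 0 2 * w 0 1.
Proof. by rewrite mxE. Qed.
Lemma cross1 (u w : V) : cross u w 0 1 = u 0 2 * w 0 0 - u 0 0 * w 0 2.
Proof. by rewrite mxE. Qed.
Lemma cross2 (u w : V) : cross u w 0 2 = u 0 0 * w 0 1 - u 0 1 * w 0 0.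
Proof. by rewrite mxE. Qed.
Definition crossE := (cross0, cross1, cross2).

Lemma coordB (u w : V) i : (u - w) 0 i = u 0 i - w 0 i.
Proof. by rewrite !mxE. Qed.
Lemma coordD (u w : V) i : (u + w) 0 i = u 0 i + w 0 i.
Proof. by rewrite mxE. Qed.
Lemma coordZ (k : R) (u : V) i : (k *: u) 0 i = k * u 0 i.
Proof. by rewrite mxE. Qed.

Lemma dot_ge0 (u : V) : 0 <= dot u u.
Proof. by rewrite dotE !addr_ge0 // -expr2 sqr_ge0. Qed.

Lemma dotZr (k : R) (u w : V) : dot u (k *: w) = k * dot u w.
Proof. by rewrite !dotE !mxE; ring. Qed.

Lemma dotZl (k : R) (u w : V) : dot (k *: u) w = k * dot u w.
Proof. by rewrite !dotE !mxE; ring. Qed.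

Lemma normr_coord_le (u : V) i : `|u 0 i| <= `|u|.
Proof.
rewrite [X in _ <= X]/Num.Def.normr /= mx_normrE.
exact: le_trans (le_bigmax _ _ (0, i)).
Qed.

Lemma normr_le_coord (u : V) (B : R) :
  0 <= B -> (forall i, `|u 0 i| <= B) -> `|u| <= B.
Proof.
move=> B0 uB; rewrite [X in X <= _]/Num.Def.normr /= mx_normrE.
by apply: bigmax_le => // -[a i] _ /=; rewrite (ord1 a).
Qed.

Lemma dot_normr_le (u w : V) : `|dot u w| <= 3 * (`|u| * `|w|).
Proof.
rewrite /dot (le_trans (ler_norm_sum _ _ _)) //.
have -> : 3 * (`|u| * `|w|) = \sum_(i < 3) `|u| * `|w|.
  by rewrite sumr_const card_ord mulr_natl.
apply: ler_sum => i _.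
by rewrite normrM ler_pM ?normr_coord_le.
Qed.

Lemma is_derive_coord (f : R -> V) x i : derivable f x 1 ->
  is_derive x 1 (fun y => f y 0 i) (derive1 f x 0 i).
Proof.
move=> df; have /derivable_mxP/(_ 0 i) dfi := df.
by apply: DeriveDef => //; rewrite derive1E derive_mx // mxE.
Qed.

Lemma continuous_coord (f : R -> V) x i :
  {for x, continuous f} -> {for x, continuous (fun y => f y 0 i)}.
Proof.
move=> /cvgrPdist_lt fx; apply/cvgrPdist_lt => e /fx; apply: filterS => y.
by apply: le_lt_trans; rewrite -coordB normr_coord_le.
Qed.

Lemma strict_derive1_near (f : R -> V) (t0 r e : R) :
  0 < r -> (forall x, `|x - t0| < r -> derivable f x 1) ->
  {for t0, continuous (derive1 f)} -> 0 < e ->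
  exists2 d : R, 0 < d & forall s t, `|s - t0| < d -> `|t - t0| < d ->
    `|f s - f t - (s - t) *: derive1 f t0| <= e * `|s - t|.
Proof.
move=> r0 D dft0 e0.
have coord i := strict_derive_near r0 (fun x hx => is_derive_coord i (D x hx))
  (continuous_coord (i := i) dft0) e0.
have [d0 d00 h0] := coord 0; have [d1 d10 h1] := coord 1; have [d2 d20 h2] := coord 2.
exists (Num.min d0 (Num.min d1 d2)); first by rewrite !lt_min d00 d10 d20.
move=> s t; rewrite !lt_min => /and3P[s0 s1 s2] /and3P[t0' t1 t2].
apply: normr_le_coord => [|i]; first by rewrite mulr_ge0 // ltW.
rewrite !mxE.
by case: (ord3P i) => ->; [exact: h0|exact: h1|exact: h2].
Qed.

End Coordinates.

Section Lipschitz.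
Variables (R : realType) (t0 : R).
Notation V := 'rV[R]_3.
Implicit Types (W : normedModType R) (k : R -> R).

Definition lipschitz_near W (f : R -> W) :=
  exists2 r : R, 0 < r & exists2 L : R, 0 <= L &
    forall s t, `|s - t0| < r -> `|t - t0| < r -> `|f s - f t| <= L * `|s - t|.

Lemma lipschitz_near_cst W (a : W) : lipschitz_near (fun=> a).
Proof. by exists 1 => //; exists 0 => // s t _ _; rewrite subrr normr0 mul0r. Qed.

Lemma lipschitz_near_eq W (f g : R -> W) r :
  0 < r -> (forall x, `|x - t0| < r -> f x = g x) ->
  lipschitz_near f -> lipschitz_near g.
Proof.
move=> r0 fg [r' r'0 [L L0 fL]]; exists (Num.min r r'); first by rewrite lt_min r0.
by exists L => // s t; rewrite !lt_min => /andP[/fg <- ?] /andP[/fg <- ?]; apply: fL.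
Qed.

Lemma lipschitz_near_continuous W (f : R -> W) :
  lipschitz_near f -> {for t0, continuous f}.
Proof.
move=> [r r0 [L L0 fL]]; apply/cvgrPdist_lt => e e0; apply/nbhs_ballP.
have L1 : 0 < L + 1 by rewrite ltr_wpDl.
have d0 : 0 < Num.min r (e / (L + 1)) by rewrite lt_min r0 divr_gt0.
exists (Num.min r (e / (L + 1))) => // x.
move=> xd; have : `|x - t0| < Num.min r (e / (L + 1)) by rewrite distrC; exact: xd.
rewrite lt_min => /andP[xr xe].
rewrite distrC (le_lt_trans (fL _ _ xr _)) ?subrr ?normr0 //.
rewrite (le_lt_trans (ler_wpM2l L0 (ltW xe))) // mulrCA gtr_pMr //.
by rewrite ltr_pdivrMr // mul1r ltrDl.
Qed.

Lemma lipschitz_near_bounded W (f : R -> W) : lipschitz_near f ->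
  exists2 r : R, 0 < r & exists2 B : R, 0 <= B & forall s, `|s - t0| < r -> `|f s| <= B.
Proof.
move=> [r r0 [L L0 fL]]; exists r => //; exists (`|f t0| + L * r) => [|s sr].
  by rewrite addr_ge0 // mulr_ge0 // ltW.
rewrite -[f s](subrK (f t0)) (le_trans (ler_normD _ _)) // addrC lerD2l.
rewrite (le_trans (fL s t0 sr _)) ?subrr ?normr0 //.
by rewrite ler_wpM2l // ltW.
Qed.

Lemma lipschitz_nearD W (f g : R -> W) :
  lipschitz_near f -> lipschitz_near g -> lipschitz_near (fun x => f x + g x).
Proof.
move=> [r r0 [L L0 fL]] [r' r'0 [L' L'0 gL]].
exists (Num.min r r'); first by rewrite lt_min r0.
exists (L + L') => [|s t]; first exact: addr_ge0.
rewrite !lt_min => /andP[sr sr'] /andP[tr tr'].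
rewrite opprD addrACA (le_trans (ler_normD _ _)) // mulrDl.
by rewrite lerD ?fL ?gL.
Qed.

Lemma lipschitz_nearN W (f : R -> W) :
  lipschitz_near f -> lipschitz_near (fun x => - f x).
Proof.
by move=> [r r0 [L L0 fL]]; exists r => //; exists L => // s t *; rewrite -opprD normrN fL.
Qed.

Lemma lipschitz_nearB W (f g : R -> W) :
  lipschitz_near f -> lipschitz_near g -> lipschitz_near (fun x => f x - g x).
Proof. by move=> lf /lipschitz_nearN; apply: lipschitz_nearD. Qed.

Lemma lipschitz_nearZ W k (f : R -> W) :
  lipschitz_near k -> lipschitz_near f -> lipschitz_near (fun x => k x *: f x).
Proof.
move=> lk lf; have [rk rk0 [Bk Bk0 kB]] := lipschitz_near_bounded lk.
have [rf rf0 [Bf Bf0 fB]] := lipschitz_near_bounded lf.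
move: lk lf => [r r0 [L L0 kL]] [r' r'0 [L' L'0 fL]].
exists (Num.min (Num.min r r') (Num.min rk rf)); first by rewrite !lt_min r0 r'0 rk0.
exists (Bk * L' + L * Bf) => [|s t]; first by rewrite addr_ge0 // mulr_ge0.
rewrite !lt_min => /andP[/andP[sr sr'] /andP[srk _]] /andP[/andP[tr tr'] /andP[_ trf]].
have -> : k s *: f s - k t *: f t = k s *: (f s - f t) + (k s - k t) *: f t.
  by rewrite scalerBr scalerBl addrA subrK.
rewrite (le_trans (ler_normD _ _)) // !normrZ mulrDl lerD //.
  by rewrite -mulrA ler_pM ?kB ?fL.
by rewrite mulrAC ler_pM ?kL ?fB.
Qed.

Lemma lipschitz_nearV k :
  lipschitz_near k -> k t0 != 0 -> lipschitz_near (fun x => (k x)^-1).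
Proof.
move=> lk k0; set m := `|k t0| / 2.
have m0 : 0 < m by rewrite divr_gt0 // normr_gt0.
have [rm rm0 km] := continuous_ball (lipschitz_near_continuous lk) m0.
have mk s : `|s - t0| < rm -> m <= `|k s|.
  move=> /km; rewrite distrC => /ltW; have := ler_normD (k s) (k t0 - k s).
  by rewrite (addrC (k s)) subrK /m; lra.
move: lk => [r r0 [L L0 kL]]; exists (Num.min r rm); first by rewrite lt_min r0.
exists (L / (m * m)) => [|s t]; first by rewrite divr_ge0 // mulr_ge0 // ltW.
rewrite !lt_min => /andP[sr /mk ms] /andP[tr /mk mt].
have [ks0 kt0] : k s != 0 /\ k t != 0.
  by split; rewrite -normr_gt0 (lt_le_trans m0).
have -> : (k s)^-1 - (k t)^-1 = (k t - k s) * ((k s)^-1 * (k t)^-1).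
  by field; apply/andP.
rewrite normrM distrC mulrAC ler_pM ?kL //.
rewrite normrM !normrV ?unitfE // invfM.
by rewrite ler_pM ?invr_ge0 // lef_pV2 ?posrE ?normr_gt0 // (lt_le_trans m0).
Qed.

Lemma lipschitz_near_sqrt k :
  lipschitz_near k -> 0 < k t0 -> lipschitz_near (fun x => Num.sqrt (k x)).
Proof.
move=> lk k0; set m := k t0 / 2.
have m0 : 0 < m by rewrite divr_gt0.
have [rm rm0 km] := continuous_ball (lipschitz_near_continuous lk) m0.
have mk s : `|s - t0| < rm -> m <= k s by move=> /km/ltW; rewrite /m ler_norml; lra.
have sm0 : 0 < Num.sqrt m by rewrite sqrtr_gt0.
move: lk => [r r0 [L L0 kL]]; exists (Num.min r rm); first by rewrite lt_min r0.
exists (L / Num.sqrt m) => [|s t]; first by rewrite divr_ge0 // ltW.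
rewrite !lt_min => /andP[sr /mk ms] /andP[tr /mk mt].
have ss : Num.sqrt m <= Num.sqrt (k s) by rewrite ler_wsqrtr.
have sp : 0 < Num.sqrt (k s) + Num.sqrt (k t).
  by rewrite ltr_wpDr ?sqrtr_ge0 // (lt_le_trans sm0).
have -> : Num.sqrt (k s) - Num.sqrt (k t) =
    (k s - k t) / (Num.sqrt (k s) + Num.sqrt (k t)).
  apply: (mulIf (lt0r_neq0 sp)); rewrite divfK ?lt0r_neq0 //.
  rewrite mulrBl !mulrDr -!expr2 !sqr_sqrtr ?(le_trans (ltW m0)) //.
  by rewrite [Num.sqrt (k t) * _]mulrC; ring.
rewrite normrM mulrAC ler_pM ?kL //.
rewrite normrV ?unitfE ?lt0r_neq0 // gtr0_norm // lef_pV2 ?posrE //.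
by rewrite (le_trans ss) // lerDl sqrtr_ge0.
Qed.

Lemma lipschitz_near_comp k (g : R -> R) :
  (forall x y, `|g x - g y| <= `|x - y|) -> lipschitz_near k ->
  lipschitz_near (fun x => g (k x)).
Proof.
move=> g1 [r r0 [L L0 kL]]; exists r => //; exists L => // s t *.
by rewrite (le_trans (g1 _ _)) ?kL.
Qed.

Lemma lipschitz_near_coord (f : R -> V) i :
  lipschitz_near f -> lipschitz_near (fun x => f x 0 i).
Proof.
move=> [r r0 [L L0 fL]]; exists r => //; exists L => // s t *.
by rewrite -coordB (le_trans (normr_coord_le _ _)) ?fL.
Qed.

Lemma lipschitz_near_row (f : R -> V) :
  (forall i, lipschitz_near (fun x => f x 0 i)) -> lipschitz_near f.
Proof.
move=> lf; have [r0 r00 [L0 L00 fL0]] := lf 0.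
have [r1 r10 [L1 L10 fL1]] := lf 1; have [r2 r20 [L2 L20 fL2]] := lf 2.
exists (Num.min r0 (Num.min r1 r2)); first by rewrite !lt_min r00 r10.
exists (L0 + L1 + L2) => [|s t]; first by rewrite !addr_ge0.
rewrite !lt_min => /and3P[s0 s1 s2] /and3P[t0' t1 t2].
apply: normr_le_coord => [|i]; first by rewrite mulr_ge0 // !addr_ge0.
have d0 := normr_ge0 (s - t); rewrite coordB.
case: (ord3P i) => ->; [move: (fL0 s t s0 t0')|move: (fL1 s t s1 t1)|move: (fL2 s t s2 t2)];
  nra.
Qed.

Lemma lipschitz_near_dot (f g : R -> V) :
  lipschitz_near f -> lipschitz_near g -> lipschitz_near (fun x => dot (f x) (g x)).
Proof.
move=> lf lg.
have c i := lipschitz_nearZ (lipschitz_near_coord i lf) (lipschitz_near_coord i lg).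
apply: (lipschitz_near_eq ltr01 _ (lipschitz_nearD (lipschitz_nearD (c 0) (c 1)) (c 2))).
by move=> x _; rewrite dotE.
Qed.

Lemma lipschitz_near_cross (f g : R -> V) :
  lipschitz_near f -> lipschitz_near g -> lipschitz_near (fun x => cross (f x) (g x)).
Proof.
move=> lf lg; apply: lipschitz_near_row => i.
have m i' j := lipschitz_nearZ (lipschitz_near_coord i' lf) (lipschitz_near_coord j lg).
have L i' j : lipschitz_near (fun x => f x 0 i' * g x 0 j - f x 0 j * g x 0 i').
  exact: lipschitz_nearB (m i' j) (m j i').
by case: (ord3P i) => ->; apply: lipschitz_near_eq ltr01 _ (L _ _) => x _;
  rewrite crossE.
Qed.

Lemma lipschitz_near_approx W (f : R -> W) (d : W) (r e : R) : 0 < r -> 0 <= e ->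
  (forall s t, `|s - t0| < r -> `|t - t0| < r ->
     `|f s - f t - (s - t) *: d| <= e * `|s - t|) ->
  lipschitz_near f.
Proof.
move=> r0 e0 fd; exists r => //; exists (e + `|d|) => [|s t sr tr].
  by rewrite addr_ge0.
rewrite -[f s - f t](subrK ((s - t) *: d)) (le_trans (ler_normD _ _)) //.
by rewrite mulrDl normrZ [`|d| * _]mulrC lerD ?fd.
Qed.

Lemma lipschitz_near_derivable k r : 0 < r ->
  (forall x, `|x - t0| < r -> derivable k x 1) -> derivable (derive1 k) t0 1 ->
  lipschitz_near k.
Proof.
move=> r0 dk /derivable1_continuous dk'.
have dk1 x : `|x - t0| < r -> is_derive x 1 k (derive1 k x).
  by move=> /dk kx; apply: DeriveDef; rewrite ?derive1E.
have [d d0 kd] := strict_derive_near r0 dk1 dk' ltr01.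
exact: lipschitz_near_approx d0 ler01 kd.
Qed.

Lemma lipschitz_near_derivable_row (f : R -> V) r : 0 < r ->
  (forall x, `|x - t0| < r -> derivable f x 1) -> derivable (derive1 f) t0 1 ->
  lipschitz_near f.
Proof.
move=> r0 df /derivable1_continuous df'.
have [d d0 fd] := strict_derive1_near r0 df df' ltr01.
exact: lipschitz_near_approx d0 ler01 fd.
Qed.

End Lipschitz.

Section Transversality.
Variable R : realType.
Notation V := 'rV[R]_3.

(* Cramer's rule: dotting [a e + b x + c y] with [cross x y], [cross y e] and
   [cross e x] isolates [a], [b] and [c] times the determinant. *)
Lemma independent_coeff_bound (e x y : V) (a b c : R) :
  `|dot e (cross x y)| * (`|a| + `|b| + `|c|) <=
  3 * (`|cross x y| + `|cross y e| + `|cross e x|) * `|a *: e + b *: x + c *: y|.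
Proof.
set u := a *: e + b *: x + c *: y; set D := dot e (cross x y).
have coeff (p : V) k : dot p u = k * D -> `|k| * `|D| <= 3 * (`|p| * `|u|).
  by move=> pu; rewrite -normrM -pu dot_normr_le.
have ha : `|a| * `|D| <= 3 * (`|cross x y| * `|u|).
  by apply: coeff; rewrite /u /D !dotE !crossE !mxE; ring.
have hb : `|b| * `|D| <= 3 * (`|cross y e| * `|u|).
  by apply: coeff; rewrite /u /D !dotE !crossE !mxE; ring.
have hc : `|c| * `|D| <= 3 * (`|cross e x| * `|u|).
  by apply: coeff; rewrite /u /D !dotE !crossE !mxE; ring.
lra.
Qed.

Lemma contraction_eq0 (P K rho U S : R) : 0 < P -> 0 <= K -> 0 <= S ->
  P * S <= K * U -> U <= rho * S -> K * rho <= P / 2 -> S = 0.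
Proof. by move=> *; apply/eqP; rewrite eq_le; apply/andP; split; nra. Qed.

Section Perturbation.
Variables (e x y : V) (rho : R).
Let P := `|dot e (cross x y)|.
Let K := 3 * (`|cross x y| + `|cross y e| + `|cross e x|).
Hypothesis P_gt0 : 0 < P.
Hypothesis rho_small : K * (2 * rho) <= P / 2.

Let K_ge0 : 0 <= K. Proof. by rewrite mulr_ge0 // !addr_ge0. Qed.

Let norm3_le (A B C : V) : `|A + B + C| <= `|A| + `|B| + `|C|.
Proof. by rewrite (le_trans (ler_normD _ _)) // lerD2r ler_normD. Qed.

Lemma perturbed_frame_crossing (A X Y : V) (h v w : R) :
  `|A - h *: e| <= rho * `|h| -> `|X - x| <= rho -> `|Y - y| <= rho ->
  A + v *: X = w *: Y -> v = 0 /\ w = 0.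
Proof.
move=> Ae Xx Yy AXY.
have Eu : h *: e + v *: x + (- w) *: y = - (A - h *: e) + - (v *: (X - x)) + w *: (Y - y).
  by apply/rowP => i; move/rowP/(_ i): AXY; rewrite !mxE; lra.
have hu : `|h *: e + v *: x + (- w) *: y| <= 2 * rho * (`|h| + `|v| + `|- w|).
  rewrite Eu (le_trans (norm3_le _ _ _)) // !normrN !normrZ.
  have := le_trans (normr_ge0 _) Xx; have := normr_ge0 v; have := normr_ge0 w.
  have := normr_ge0 h; nra.
have := contraction_eq0 P_gt0 K_ge0 _
  (independent_coeff_bound e x y h v (- w)) hu rho_small.
rewrite normrN => /(_ ltac:(by rewrite !addr_ge0)) S0.
have := normr_ge0 h; have := normr_ge0 v; have := normr_ge0 w.
by split; apply/normr0_eq0; lra.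
Qed.

Lemma perturbed_ruling_crossing (A Y Z : V) (h v w : R) :
  `|A - h *: e| <= rho * `|h| -> `|Y - y| <= rho -> `|v *: Z| <= rho * `|h| ->
  A + v *: Z + (v - w) *: Y = 0 -> h = 0 /\ v = w.
Proof.
move=> Ae Yy vZ AYZ.
have Eu : h *: e + 0 *: x + (v - w) *: y =
    - (A - h *: e) + - (v *: Z) + - ((v - w) *: (Y - y)).
  by apply/rowP => i; move/rowP/(_ i): AYZ; rewrite !mxE; lra.
have hu : `|h *: e + 0 *: x + (v - w) *: y| <= 2 * rho * (`|h| + `|0 : R| + `|v - w|).
  rewrite normrZ in vZ; rewrite Eu (le_trans (norm3_le _ _ _)) //.
  rewrite !normrN !normrZ normr0 addr0.
  have := le_trans (normr_ge0 _) Yy; have := normr_ge0 (v - w).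
  have := normr_ge0 h; nra.
have := contraction_eq0 P_gt0 K_ge0 _
  (independent_coeff_bound e x y h 0 (v - w)) hu rho_small.
rewrite normr0 addr0 => /(_ ltac:(by rewrite !addr_ge0)) S0.
have h0 := normr_ge0 h; have vw0 := normr_ge0 (v - w).
have /normr0_eq0 -> : `|h| = 0 by lra.
by have /normr0_eq0/subr0_eq : `|v - w| = 0 by lra.
Qed.

End Perturbation.

Lemma transversal_near (c xi eta : R -> V) (t0 r0 : R) :
  0 < r0 -> (forall x, `|x - t0| < r0 -> derivable c x 1) ->
  {for t0, continuous (derive1 c)} -> {for t0, continuous xi} ->
  lipschitz_near t0 eta -> dot (derive1 c t0) (cross (xi t0) (eta t0)) != 0 ->
  exists2 r : R, 0 < r & forall s t v w, `|s - t0| < r -> `|t - t0| < r ->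
     (c s + v *: xi s = c t + w *: eta t -> v = 0 /\ w = 0) /\
     (`|v| < r -> c s + v *: eta s = c t + w *: eta t -> s = t /\ v = w).
Proof.
move=> r00 dc dc_t0 xi_t0 leta D0.
set e0 := derive1 c t0; set x0 := xi t0; set y0 := eta t0.
set P := `|dot e0 (cross x0 y0)|.
set K := 3 * (`|cross x0 y0| + `|cross y0 e0| + `|cross e0 x0|).
have P0 : 0 < P by rewrite normr_gt0.
have K1 : 0 < K + 1 by rewrite ltr_wpDl // mulr_ge0 // !addr_ge0.
set rho := P / (4 * (K + 1)).
have rho0 : 0 < rho by rewrite divr_gt0 // mulr_gt0.
have rho_small : K * (2 * rho) <= P / 2.
  have -> : K * (2 * rho) = K / (K + 1) * (P / 2) by rewrite /rho; field; rewrite gt_eqF.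
  have KK : K / (K + 1) <= 1 by rewrite ler_pdivrMr // mul1r lerDl.
  by apply: ler_piMl => //; rewrite divr_ge0 // ltW.
have [d1 d10 cd] := strict_derive1_near r00 dc dc_t0 rho0.
have [d2 d20 xid] := continuous_ball xi_t0 rho0.
have [d3 d30 etad] := continuous_ball (lipschitz_near_continuous leta) rho0.
have [d4 d40 [L L0 etaL]] := leta.
have L1 : 0 < L + 1 by rewrite ltr_wpDl.
exists (Num.min (Num.min d1 d2) (Num.min (Num.min d3 d4) (rho / (L + 1)))).
  by rewrite !lt_min d10 d20 d30 d40 divr_gt0.
move=> s t v w; rewrite !lt_min.
move=> /andP[/andP[s1 s2] /andP[/andP[_ s4] _]].
move=> /andP[/andP[t1 _] /andP[/andP[t3 t4] _]].
have {}cd := cd s t s1 t1; have {}etad := ltW (etad t t3).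
split=> [E | /andP[_ /andP[_ vr]] E].
  apply: (perturbed_frame_crossing P0 rho_small cd (ltW (xid s s2)) etad).
  by rewrite addrAC E addrC addKr.
have vZ : `|v *: (eta s - eta t)| <= rho * `|s - t|.
  rewrite normrZ (le_trans (ler_wpM2l (normr_ge0 v) (etaL s t s4 t4))) // mulrA.
  apply: ler_wpM2r => //; rewrite ltr_pdivlMr // in vr; have := normr_ge0 v; lra.
have AYZ : c s - c t + v *: (eta s - eta t) + (v - w) *: eta t = 0.
  by apply/rowP => i; move/rowP/(_ i): E; rewrite !mxE; lra.
by have [/subr0_eq] := perturbed_ruling_crossing P0 rho_small cd etad vZ AYZ.
Qed.

End Transversality.

Section Frenet.
Variable R : realType.
Notation V := 'rV[R]_3.
Implicit Types (c : R -> V) (a : R -> R).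
Local Notation c2 c := (derive1 (derive1 c)).
Local Notation c3 c := (derive1 (derive1 (derive1 c))).

Lemma dot_self_is_derive (f : R -> V) x : derivable f x 1 ->
  is_derive x 1 (fun y => dot (f y) (f y)) (2 * dot (f x) (derive1 f x)).
Proof.
move=> df; have h0 := is_derive_coord 0 df; have h1 := is_derive_coord 1 df.
have h2 := is_derive_coord 2 df.
have -> : (fun y => dot (f y) (f y)) =
    (fun y => f y 0 0 * f y 0 0 + f y 0 1 * f y 0 1 + f y 0 2 * f y 0 2).
  by apply/funext => y; rewrite dotE.
eapply trigger_derive; first by apply: is_deriveD.
by rewrite dotE /GRing.scale /=; ring.
Qed.

Lemma unit_dot (u : V) : enorm u = 1 -> dot u u = 1.
Proof. by move=> u1; rewrite -[dot u u]sqr_sqrtr ?dot_ge0 // -/(enorm u) u1 expr1n. Qed.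

Lemma unit_normr_le1 (u : V) : dot u u = 1 -> `|u| <= 1.
Proof.
rewrite dotE => u1; apply: normr_le_coord => // i; rewrite -(ler_pXn2r (n := 2)) ?nnegrE //.
rewrite expr1n real_normK ?num_real //.
by have := sqr_ge0 (u 0 0); have := sqr_ge0 (u 0 1); have := sqr_ge0 (u 0 2);
  case: (ord3P i) => ->; rewrite !expr2; lra.
Qed.

Lemma curvature_derivable c x : derivable (c2 c) x 1 -> 0 < curvature c x ->
  derivable (curvature c) x 1.
Proof.
move=> d2 k0; have q0 : 0 < dot (c2 c x) (c2 c x) by rewrite -sqrtr_gt0.
by case: (is_derive1_comp (is_derive1_sqrt q0) (dot_self_is_derive d2)).
Qed.

Lemma derive1_pnormal c x : derivable (c2 c) x 1 -> 0 < curvature c x ->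
  derive1 (pnormal c) x =
    (curvature c x)^-1 *: c3 c x + derive1 (fun y => (curvature c y)^-1) x *: c2 c x.
Proof.
move=> d2 k0; have dk := curvature_derivable d2 k0.
have dki : derivable (fun y => (curvature c y)^-1) x 1.
  by apply: derivableV => //; rewrite gt_eqF.
have E i j : (fun y => pnormal c y i j) =
    ((fun y => (curvature c y)^-1) * (fun y => c2 c y i j)).
  by apply/funext => y; rewrite /pnormal mxE.
have dc i j : derivable (fun y => c2 c y i j) x 1 by move/derivable_mxP: d2; apply.
have dn : derivable (pnormal c) x 1.
  by apply/derivable_mxP => i j; rewrite E; apply: derivableM.
apply/rowP => j; rewrite derive1E (derive_mx dn) mxE E (deriveM dki (dc 0 j)).
case: (is_derive_coord j d2) => _ ->; rewrite -derive1E.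
by move: (c3 c x) (c2 c x) => u w; rewrite !mxE /GRing.scale /=; ring.
Qed.

Lemma dot_cross_orth (u w e : V) (k d : R) :
  dot (k *: u + d *: w) (cross e w) = k * dot u (cross e w).
Proof. by rewrite !dotE !crossE !mxE; ring. Qed.

(* Only [c'''] contributes, since [c''] is orthogonal to the binormal. *)
Lemma torsionE c x : derivable (c2 c) x 1 -> 0 < curvature c x ->
  torsion c x = (curvature c x)^-1 * dot (c3 c x) (binormal c x).
Proof.
move=> d2 k0; rewrite /torsion derive1_pnormal //.
have -> : c2 c x = curvature c x *: pnormal c x.
  by rewrite /pnormal scalerA mulfV ?scale1r // gt_eqF.
by rewrite scalerA dot_cross_orth.
Qed.

Lemma pnormal_unit c x : 0 < curvature c x -> dot (pnormal c x) (pnormal c x) = 1.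
Proof.
move=> k0; have -> : pnormal c x = (curvature c x)^-1 *: c2 c x by [].
have k2 : dot (c2 c x) (c2 c x) = curvature c x ^+ 2.
  by rewrite /curvature /enorm sqr_sqrtr ?dot_ge0.
by rewrite dotZl dotZr k2 mulrA -expr2 -exprMn mulVf ?expr1n // gt_eqF.
Qed.

Lemma tangent_pnormal_orth c x r : 0 < r ->
  (forall y, `|y - x| < r -> enorm (derive1 c y) = 1) ->
  derivable (derive1 c) x 1 -> dot (tangent c x) (pnormal c x) = 0.
Proof.
move=> r0 c1 d1; rewrite /tangent /pnormal dotZr.
have E : \forall y \near x, dot (derive1 c y) (derive1 c y) = cst (1 : R) y.
  apply/nbhs_ballP; exists r => // y yx; rewrite /cst unit_dot // c1 //.
  by rewrite distrC; exact: yx.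
have := @near_eq_derive R R R _ _ x 1 E.
case: (dot_self_is_derive d1) => _ ->; rewrite derive_cst.
by move/eqP; rewrite mulf_eq0 pnatr_eq0 /= => /eqP ->; rewrite mulr0.
Qed.

Lemma frenet_orthonormal c x r : 0 < r ->
  (forall y, `|y - x| < r -> enorm (derive1 c y) = 1) ->
  derivable (derive1 c) x 1 -> 0 < curvature c x ->
  [/\ dot (tangent c x) (tangent c x) = 1, dot (pnormal c x) (pnormal c x) = 1
    & dot (tangent c x) (pnormal c x) = 0].
Proof.
move=> r0 c1 d1 k0; split; [|exact: pnormal_unit|exact: tangent_pnormal_orth c1 d1].
by apply: unit_dot; apply: c1; rewrite subrr normr0.
Qed.

Lemma dot_frame_combination (e n : V) (cb sb ca sa : R) :
  dot (cb *: e + sb *: (ca *: n + sa *: cross e n))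
      (cb *: e + sb *: (ca *: n + sa *: cross e n)) =
  cb ^+ 2 * dot e e + sb ^+ 2 * (ca ^+ 2 * dot n n
    + sa ^+ 2 * (dot e e * dot n n - dot e n ^+ 2)) + 2 * cb * sb * ca * dot e n.
Proof. by rewrite !dotE !coordD !coordZ !coordD !coordZ !crossE; ring. Qed.

Lemma det_frame_combinations (e n : V) (cb sb cb' sb' ca sa : R) :
  dot e (cross (cb *: e + sb *: (ca *: n + sa *: cross e n))
               (cb' *: e + sb' *: (ca *: n + (- sa) *: cross e n))) =
  - 2 * sb * sb' * sa * ca * (dot e e * dot n n - dot e n ^+ 2).
Proof. by rewrite !dotE !crossE !coordD !coordZ !coordD !coordZ !crossE; ring. Qed.

Lemma ruling_unit c a x :
  dot (tangent c x) (tangent c x) = 1 -> dot (pnormal c x) (pnormal c x) = 1 ->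
  dot (tangent c x) (pnormal c x) = 0 -> dot (ruling c a x) (ruling c a x) = 1.
Proof.
move=> ee nn en; rewrite /ruling /binormal dot_frame_combination ee nn en.
by rewrite expr0n /= subr0 !mulr1 mulr0 addr0 cos2Dsin2 mulr1 cos2Dsin2.
Qed.

Lemma sin_beta_gt0 (X : R) : 0 < sin (pi / 2 - atan X).
Proof.
rewrite sinB sin_pihalf cos_pihalf mul1r mul0r subr0 cos_atan invr_gt0 sqrtr_gt0.
by rewrite ltr_pwDl // sqr_ge0.
Qed.

Lemma tangent_ruling_dual_det c a x :
  dot (tangent c x) (tangent c x) = 1 -> dot (pnormal c x) (pnormal c x) = 1 ->
  dot (tangent c x) (pnormal c x) = 0 -> sin (a x) != 0 -> cos (a x) != 0 ->
  dot (tangent c x) (cross (ruling c a x) (ruling c (fun s => - a s) x)) != 0.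
Proof.
move=> ee nn en sa ca; rewrite /ruling cosN sinN /binormal det_frame_combinations.
rewrite ee nn en expr0n /= subr0 mulr1 !mulf_neq0 ?oppr_eq0 ?pnatr_eq0 //.
  exact/lt0r_neq0/sin_beta_gt0.
exact/lt0r_neq0/sin_beta_gt0.
Qed.

Lemma ruling_lipschitz_near c a t0 r0 : 0 < r0 ->
  (forall n x, `|x - t0| < r0 -> derivable (iter n (@derive1 R V) c) x 1) ->
  (forall x, `|x - t0| < r0 -> 0 < curvature c x) ->
  lipschitz_near t0 a -> lipschitz_near t0 (derive1 a) -> sin (a t0) != 0 ->
  lipschitz_near t0 (ruling c a).
Proof.
move=> r00 dc k0 la la' sa; have t0r : `|t0 - t0| < r0 by rewrite subrr normr0.
have ld n : lipschitz_near t0 (iter n (@derive1 R V) c).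
  exact: lipschitz_near_derivable_row r00 (dc n) (dc n.+1 t0 t0r).
have l1 : lipschitz_near t0 (derive1 c) := ld 1%N.
have l2 : lipschitz_near t0 (c2 c) := ld 2%N.
have l3 : lipschitz_near t0 (c3 c) := ld 3%N.
have q0 : 0 < dot (c2 c t0) (c2 c t0) by rewrite -sqrtr_gt0; exact: k0.
have lk : lipschitz_near t0 (curvature c).
  exact: lipschitz_near_sqrt (lipschitz_near_dot l2 l2) q0.
have lki := lipschitz_nearV lk (lt0r_neq0 (k0 _ t0r)).
have ln : lipschitz_near t0 (pnormal c) := lipschitz_nearZ lki l2.
have lb : lipschitz_near t0 (binormal c) := lipschitz_near_cross l1 ln.
have lt : lipschitz_near t0 (torsion c).
  apply: lipschitz_near_eq r00 _ (lipschitz_nearZ lki (lipschitz_near_dot l3 lb)).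
  by move=> x xr; rewrite (torsionE (dc 2%N x xr) (k0 x xr)).
have lsa := lipschitz_near_comp (@sin_lipschitz R) la.
have lca := lipschitz_near_comp (@cos_lipschitz R) la.
have ksa0 : curvature c t0 * sin (a t0) != 0 by rewrite mulf_neq0 // lt0r_neq0 ?k0.
have lbeta : lipschitz_near t0 (beta_of c a).
  have := lipschitz_nearZ (lipschitz_nearD la' lt)
    (lipschitz_nearV (lipschitz_nearZ lk lsa) ksa0).
  move=> /(lipschitz_near_comp (@atan_lipschitz R)).
  move=> /(lipschitz_nearB (lipschitz_near_cst t0 (pi / 2))).
  exact: lipschitz_near_eq ltr01 (fun x _ => erefl).
have := lipschitz_nearD (lipschitz_nearZ (lipschitz_near_comp (@cos_lipschitz R) lbeta) l1)
  (lipschitz_nearZ (lipschitz_near_comp (@sin_lipschitz R) lbeta)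
     (lipschitz_nearD (lipschitz_nearZ lca ln) (lipschitz_nearZ lsa lb))).
exact: lipschitz_near_eq ltr01 (fun x _ => erefl).
Qed.

End Frenet.

Section Compactness.
Variable R : realType.
Notation V := 'rV[R]_3.

Lemma compact_cluster (T : topologicalType) (K : set T) (B : R -> set T) :
  compact K -> (forall e, 0 < e -> B e !=set0) -> (forall e, B e `<=` K) ->
  (forall e e', e <= e' -> B e `<=` B e') ->
  exists2 p, K p & forall e N, 0 < e -> nbhs p N -> B e `&` N !=set0.
Proof.
move=> cK Bne BK Bmono; pose FF := filter_from [set e : R | 0 < e] B.
have FFp : ProperFilter FF.
  apply: filter_from_proper; last by move=> e /Bne.
  apply: filter_from_filter; first by exists 1; rewrite /= ltr01.
  move=> i j i0 j0; exists (Num.min i j); first by rewrite /= lt_min i0 j0.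
  by move=> q Bq; split; apply: Bmono Bq; rewrite ge_min lexx ?orbT.
have [|p [Kp clp]] := cK FF FFp; first by exists 1 => //=; apply: BK.
by exists p => // e N e0; apply: clp; exists e.
Qed.

Lemma continuous_eq_of_near (W : normedModType R) (c : R -> W) (s0 t0 : R) :
  {for s0, continuous c} -> {for t0, continuous c} ->
  (forall e r, 0 < e -> 0 < r ->
     exists s t, [/\ `|s - s0| < r, `|t - t0| < r & `|c s - c t| <= e]) ->
  c s0 = c t0.
Proof.
move=> cs0 ct0 near_close; apply: contrapT => /eqP; rewrite -subr_eq0 -normr_gt0.
set d := `|c s0 - c t0| => d0; have d30 : 0 < d / 3 by rewrite divr_gt0.
have [r1 r10 h1] := continuous_ball cs0 d30; have [r2 r20 h2] := continuous_ball ct0 d30.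
have r0 : 0 < Num.min r1 r2 by rewrite lt_min r10 r20.
have [s [t []]] := near_close _ _ d30 r0; rewrite !lt_min.
move=> /andP[/h1 ss0 _] /andP[_ /h2 tt0] st; rewrite distrC in ss0.
have : d <= `|c s0 - c s| + `|c s - c t| + `|c t - c t0|.
  by rewrite (le_trans (ler_distD (c t) _ _)) // lerD2r ler_distD.
lra.
Qed.

Definition meet_only_on_curve (c : R -> V) (F G : R -> R -> V) (s t v w : R) :=
  (F s v = G t w -> v = 0 /\ w = 0) /\ (G s v = G t w -> c s = c t /\ v = w).

Lemma not_meet_only_on_curve_close (c : R -> V) (F G : R -> R -> V) s t v w M :
  `|F s v - c s| <= M * `|v| -> `|G s v - c s| <= M * `|v| ->
  `|G t w - c t| <= M * `|w| -> ~ meet_only_on_curve c F G s t v w ->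
  `|c s - c t| <= M * `|v| + M * `|w|.
Proof.
move=> Fs Gs Gt bad; rewrite (le_trans (ler_distD (G t w) _ _)) // lerD // distrC.
case: (pselect (F s v = G t w)) => [<- //|nF].
case: (pselect (G s v = G t w)) => [<- //|nG].
by case: bad; split.
Qed.

Section Uniform.
Variables (a b M : R) (c : R -> V) (F G : R -> R -> V).
Hypothesis c_cont : forall s, a <= s <= b -> {for s, continuous c}.
Hypothesis sheets_close : forall s v, a <= s <= b ->
  `|F s v - c s| <= M * `|v| /\ `|G s v - c s| <= M * `|v|.
Hypothesis meet_near_pairs : forall t0 t1, a <= t0 <= b -> a <= t1 <= b -> c t0 = c t1 ->
  exists2 r : R, 0 < r & forall s t v w, `|s - t0| < r -> `|t - t1| < r ->
    `|v| < r -> `|w| < r -> meet_only_on_curve c F G s t v w.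

Lemma meet_only_on_curve_uniform : exists2 eps : R, 0 < eps &
  forall s t v w, a <= s <= b -> a <= t <= b -> `|v| < eps -> `|w| < eps ->
    meet_only_on_curve c F G s t v w.
Proof.
apply: contrapT => no_eps.
pose K := `[a, b] `*` `[a, b].
pose B e := [set p : R * R | K p /\ exists v w,
  [/\ `|v| < e, `|w| < e & ~ meet_only_on_curve c F G p.1 p.2 v w]].
have Bne e : 0 < e -> B e !=set0.
  move=> e0; apply: contrapT => B0; apply: no_eps; exists e => // s t v w s_ab t_ab ve we.
  apply: contrapT => bad; apply: B0; exists (s, t); split; last by exists v, w.
  by split; rewrite /= in_itv.
have Bmono e e' : e <= e' -> B e `<=` B e'.
  move=> ee' p [Kp [v [w [ve we bad]]]]; split => //.
  by exists v, w; split => //; apply: lt_le_trans ee'.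
have K_compact : compact K by apply: compact_setX; apply: segment_compact.
have [[s0 t0] [/= s0K t0K] cl] :=
  compact_cluster K_compact Bne (fun _ _ => @proj1 _ _) Bmono.
rewrite /= in_itv /= in s0K; rewrite /= in_itv /= in t0K.
have bad_near e r : 0 < e -> 0 < r -> exists s t v w,
    [/\ a <= s <= b, a <= t <= b, `|s - s0| < r, `|t - t0| < r &
     [/\ `|v| < e, `|w| < e & ~ meet_only_on_curve c F G s t v w]].
  move=> e0 r0.
  have box : nbhs (s0, t0) [set q : R * R | `|q.1 - s0| < r /\ `|q.2 - t0| < r].
    exists (ball s0 r, ball t0 r) => [|[x y] [/= xr yr]].
      by split; apply: nbhsx_ballx.
    by rewrite /ball /= in xr yr; rewrite /= distrC xr distrC yr.
  have [[s t] [[[/= s_ab t_ab] [v [w [ve we bad]]]] [/= sr tr]]] := cl e _ e0 box.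
  by rewrite /= in_itv /= in s_ab; rewrite /= in_itv /= in t_ab; exists s, t, v, w.
have c_s0t0 : c s0 = c t0.
  apply: continuous_eq_of_near (c_cont s0K) (c_cont t0K) _ => e r e0 r0.
  have M1 : 0 < 2 * (`|M| + 1) by rewrite mulr_gt0 // ltr_wpDl.
  have [s [t [v [w [s_ab t_ab sr tr [ve we bad]]]]]] :=
    bad_near (e / (2 * (`|M| + 1))) r (divr_gt0 e0 M1) r0.
  exists s, t; split => //.
  have [Fs Gs] := sheets_close v s_ab; have [_ Gt] := sheets_close w t_ab.
  rewrite (le_trans (not_meet_only_on_curve_close Fs Gs Gt bad)) //.
  rewrite !ltr_pdivlMr // in ve we.
  have Mx (x : R) : M * `|x| <= (`|M| + 1) * `|x|.
    by rewrite ler_wpM2r // (le_trans (ler_norm M)) // lerDl.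
  have := Mx v; have := Mx w; lra.
have [r r0 meet_r] := meet_near_pairs s0K t0K c_s0t0.
have [s [t [v [w [_ _ sr tr [vr wr bad]]]]]] := bad_near r r r0 r0.
exact/bad/meet_r.
Qed.

End Uniform.

End Compactness.

Section Periodic.
Variables (R : realType) (l : R).
Notation V := 'rV[R]_3.

Lemma periodic_int (W : zmodType) (f : R -> W) : periodic f l ->
  forall (k : int) x, f (x + k%:~R * l) = f x.
Proof.
move=> fl; have fn (n : nat) x : f (x + n%:R * l) = f x by rewrite mulr_natl periodicn.
case=> [n|n] x; first exact: fn.
by rewrite NegzE mulrNz mulNr -[in RHS](subrK (n.+1%:R * l) x) fn.
Qed.

Lemma periodic_intB (W : zmodType) (f : R -> W) : periodic f l ->
  forall (k : int) x, f (x - k%:~R * l) = f x.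
Proof. by move=> fl k x; rewrite -mulNr -intrN periodic_int. Qed.

Lemma periodic_derive1 (W : normedModType R) (f : R -> W) :
  periodic f l -> periodic (derive1 f) l.
Proof.
move=> fl x; rewrite /derive1.
suff -> : (fun h => h^-1 *: (f (h + (x + l)) - f (x + l))) =
          (fun h => h^-1 *: (f (h + x) - f x)) by [].
by apply/funext => h; rewrite addrA !fl.
Qed.

Lemma periodic_ruling (c : R -> V) (a : R -> R) :
  periodic c l -> periodic a l -> periodic (ruling c a) l.
Proof.
move=> pc pa x; have p1 := periodic_derive1 pc; have p2 := periodic_derive1 p1.
have pk y : curvature c (y + l) = curvature c y by rewrite /curvature p2.
have pn y : pnormal c (y + l) = pnormal c y by rewrite /pnormal pk p2.
have pb y : binormal c (y + l) = binormal c y by rewrite /binormal /tangent p1 pn.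
have pt y : torsion c (y + l) = torsion c y by rewrite /torsion (periodic_derive1 pn) pb.
have pbeta : beta_of c a (x + l) = beta_of c a x.
  by rewrite /beta_of (periodic_derive1 pa) pt pk pa.
by rewrite /ruling pbeta /tangent p1 pn pb pa.
Qed.

Lemma periodic_normal_form (c : R -> V) (a : R -> R) v :
  periodic c l -> periodic a l -> periodic (fun s => normal_form c a s v) l.
Proof. by move=> pc pa x; rewrite /normal_form pc (periodic_ruling pc pa). Qed.

Hypothesis l_gt0 : 0 < l.

Lemma floor_reduce (x : R) : exists k : int, 0 <= x - k%:~R * l < l.
Proof.
exists (Num.floor (x / l)); have := Num.Theory.floor_le (x / l).
have := Num.Theory.floorD1_gt (x / l); rewrite intrD.
rewrite ltr_pdivrMr // ler_pdivlMr // mulrDl mul1r => h1 h2.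
by rewrite subr_ge0 h2 ltrBlDr addrC.
Qed.

Lemma periodic_injective_eq (W : zmodType) (c : R -> W) : periodic c l ->
  {in `[0, l[%classic &, injective c} ->
  forall x y, c x = c y -> exists k : int, y = x + k%:~R * l.
Proof.
move=> pc inj x y cxy.
have [kx hx] := floor_reduce x; have [ky hy] := floor_reduce y.
have mem z : 0 <= z < l -> z \in `[0, l[%classic by rewrite inE /= in_itv.
have := inj _ _ (mem _ hx) (mem _ hy); rewrite !periodic_intB // => /(_ cxy) E.
by exists (ky - kx); rewrite intrB mulrBl -[y](subrK (ky%:~R * l)) -E; ring.
Qed.

End Periodic.

Section LocalSheets.
Variable R : realType.
Notation V := 'rV[R]_3.
Implicit Types (c : R -> V) (alpha : R -> R).

Lemma sin_neq0_cos_gt0 (x : R) : 0 < `|x| < pi / 2 -> sin x != 0 /\ 0 < cos x.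
Proof.
move=> /andP[x0 xpi]; split; last by apply: cos_gt0_pihalf; rewrite -ltr_norml.
have : 0 < sin `|x| by apply: sin_gt0_pihalf; rewrite x0 xpi.
by case: (ler0P x) => _; rewrite ?sinN ?oppr_gt0; [exact: ltr0_neq0|exact: lt0r_neq0].
Qed.

Definition regular_near c alpha (t0 r0 : R) := forall x, `|x - t0| < r0 ->
  [/\ forall n, derivable (iter n (@derive1 R V) c) x 1,
      forall n, derivable (iter n (@derive1 R R) alpha) x 1,
      enorm (derive1 c x) = 1, 0 < curvature c x & 0 < `|alpha x| < pi / 2].

Lemma normal_form0 c alpha s : normal_form c alpha s 0 = c s.
Proof. by rewrite /normal_form scale0r addr0. Qed.

Lemma normal_form_close c alpha s v r0 : 0 < r0 ->
  (forall y, `|y - s| < r0 -> enorm (derive1 c y) = 1) ->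
  derivable (derive1 c) s 1 -> 0 < curvature c s ->
  `|normal_form c alpha s v - c s| <= `|v|.
Proof.
move=> r00 c1 d1 k0; have [ee nn en] := frenet_orthonormal r00 c1 d1 k0.
by rewrite /normal_form addrC addKr normrZ ler_piMr // unit_normr_le1 // ruling_unit.
Qed.

Lemma normal_dual_meet_near c alpha (t0 r0 : R) : 0 < r0 -> regular_near c alpha t0 r0 ->
  exists2 r : R, 0 < r & forall s t v w, `|s - t0| < r -> `|t - t0| < r ->
    `|v| < r -> `|w| < r ->
    meet_only_on_curve c (normal_form c alpha) (dual_form c alpha) s t v w.
Proof.
move=> r00 reg; have t0r : `|t0 - t0| < r0 by rewrite subrr normr0.
have dc n x (xr : `|x - t0| < r0) : derivable (iter n (@derive1 R V) c) x 1.
  by case: (reg x xr).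
have da n x (xr : `|x - t0| < r0) : derivable (iter n (@derive1 R R) alpha) x 1.
  by case: (reg x xr).
have k0 x (xr : `|x - t0| < r0) : 0 < curvature c x by case: (reg x xr).
have [_ _ _ _ /sin_neq0_cos_gt0[sa ca]] := reg t0 t0r.
have la : lipschitz_near t0 alpha := lipschitz_near_derivable r00 (da 0%N) (da 1%N t0 t0r).
have la' : lipschitz_near t0 (derive1 alpha) :=
  lipschitz_near_derivable r00 (da 1%N) (da 2%N t0 t0r).
have lna' : lipschitz_near t0 (derive1 (fun s => - alpha s)).
  apply: lipschitz_near_eq r00 _ (lipschitz_nearN la') => x xr.
  by rewrite (derive1N (da 0%N x xr)).
have lxi := ruling_lipschitz_near r00 dc k0 la la' sa.
have leta := ruling_lipschitz_near r00 dc k0 (lipschitz_nearN la) lna'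
  (ltac:(by rewrite sinN oppr_eq0)).
have c1 y (yr : `|y - t0| < r0) : enorm (derive1 c y) = 1 by case: (reg y yr).
have [ee nn en] := frenet_orthonormal r00 c1 (dc 1%N t0 t0r) (k0 t0 t0r).
have [r r_gt0 T] := transversal_near r00 (dc 0%N)
  (derivable1_continuous (dc 1%N t0 t0r))
  (lipschitz_near_continuous lxi) leta (tangent_ruling_dual_det ee nn en sa (lt0r_neq0 ca)).
exists r => [//|s t v w sr tr vr _]; have [T1 T2] := T s t v w sr tr.
by split=> [/T1 //|/(T2 vr) [-> ->]].
Qed.

Lemma meet_only_on_curve_eq c (F G : R -> R -> V) s s' t t' v w :
  (forall u, F s' u = F s u) -> (forall u, G s' u = G s u) -> c s' = c s ->
  (forall u, G t' u = G t u) -> c t' = c t ->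
  meet_only_on_curve c F G s' t' v w -> meet_only_on_curve c F G s t v w.
Proof. by move=> Fs Gs cs Gt ct; rewrite /meet_only_on_curve Fs Gs cs Gt ct. Qed.

Section Segment.
Variables (a b : R) (c : R -> V) (alpha : R -> R).
Hypothesis regular : forall t0, a <= t0 <= b ->
  exists2 r0 : R, 0 < r0 & regular_near c alpha t0 r0.
Hypothesis shift_invariant : forall t0 t1, a <= t0 <= b -> a <= t1 <= b -> c t0 = c t1 ->
  forall t, (forall u, dual_form c alpha (t + (t0 - t1)) u = dual_form c alpha t u) /\
    c (t + (t0 - t1)) = c t.

Lemma meet_only_on_curve_segment : exists2 e : R, 0 < e &
  forall s t v w, a <= s <= b -> a <= t <= b -> `|v| < e -> `|w| < e ->
    meet_only_on_curve c (normal_form c alpha) (dual_form c alpha) s t v w.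
Proof.
have c_cont s : a <= s <= b -> {for s, continuous c}.
  move=> /regular[r0 r00 reg]; have [dc _ _ _ _] := reg s ltac:(by rewrite subrr normr0).
  exact: derivable1_continuous (dc 0%N).
have close s v : a <= s <= b -> `|normal_form c alpha s v - c s| <= 1 * `|v| /\
    `|dual_form c alpha s v - c s| <= 1 * `|v|.
  move=> /regular[r0 r00 reg]; have [dc _ _ k0 _] := reg s ltac:(by rewrite subrr normr0).
  have c1 y (ys : `|y - s| < r0) : enorm (derive1 c y) = 1 by case: (reg y ys).
  by rewrite !mul1r; split; apply: normal_form_close r00 c1 (dc 1%N) k0.
apply: meet_only_on_curve_uniform c_cont close _ => t0 t1 t0ab t1ab ct.
have [r0 r00 reg] := regular t0ab; have [r r_gt0 meet_r] := normal_dual_meet_near r00 reg.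
exists r => [//|s t v w sr tr vr wr]; have [Gt ct'] := shift_invariant t0ab t1ab ct t.
apply: meet_only_on_curve_eq (fun=> erefl) (fun=> erefl) erefl Gt ct'
  (meet_r _ _ _ _ sr _ vr wr).
by rewrite addrA addrAC addrK.
Qed.

End Segment.
End LocalSheets.

Section CurveData.
Variable R : realType.
Notation V := 'rV[R]_3.
Implicit Types (c : R -> V) (alpha : R -> R).

Lemma closed_curve_meet l c alpha : curve_data true l c alpha ->
  exists2 e : R, 0 < e & forall s t v w, `|v| < e -> `|w| < e ->
    meet_only_on_curve c (normal_form c alpha) (dual_form c alpha) s t v w.
Proof.
move=> [l0 [[per inj] [_ [_ [Sc [Sa Sg]]]]]].
have pc : periodic c l by move=> x; case: (per x).
have pa : periodic alpha l by move=> x; case: (per x).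
have pF u : periodic ((normal_form c alpha)^~ u) l := periodic_normal_form u pc pa.
have pG u : periodic ((dual_form c alpha)^~ u) l.
  by apply: periodic_normal_form pc _ => x; rewrite pa.
have regular t0 : 0 <= t0 <= l -> exists2 r0 : R, 0 < r0 & regular_near c alpha t0 r0.
  by exists 1 => // x _; have [? [? ?]] := Sg x I; split => // n; [exact: Sc | exact: Sa].
have [|e e0 meet_e] := meet_only_on_curve_segment regular.
  move=> t0 t1 _ _ /(periodic_injective_eq l0 pc inj)[k ->] t; rewrite opprD addNKr.
  by split => [u|]; [exact: periodic_intB (pG u) k t|exact: periodic_intB pc k t].
exists e => [//|s t v w ve we].
have [ks /andP[s0 /ltW sl]] := floor_reduce l0 s.
have [kt /andP[t0 /ltW tl]] := floor_reduce l0 t.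
have m := meet_e (s - ks%:~R * l) (t - kt%:~R * l) v w
  ltac:(by rewrite s0) ltac:(by rewrite t0) ve we.
apply: (meet_only_on_curve_eq _ _ _ _ _ m).
- by move=> u; apply: periodic_intB (pF u) ks s.
- by move=> u; apply: periodic_intB (pG u) ks s.
- exact: periodic_intB pc ks s.
- by move=> u; apply: periodic_intB (pG u) kt t.
- exact: periodic_intB pc kt t.
Qed.

Lemma open_curve_meet l c alpha : curve_data false l c alpha ->
  exists2 e : R, 0 < e & forall s t v w, Jset false l s -> Jset false l t ->
    `|v| < e -> `|w| < e ->
    meet_only_on_curve c (normal_form c alpha) (dual_form c alpha) s t v w.
Proof.
move=> [l0 [inj [delta [d0 [Sc [Sa Sg]]]]]].
have inJ x : Jset false l x <-> - (l / 2) <= x <= l / 2 by rewrite /Jset /= in_itv.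
have regular t0 : - (l / 2) <= t0 <= l / 2 ->
    exists2 r0 : R, 0 < r0 & regular_near c alpha t0 r0.
  move=> t0J; exists delta => // x xt0.
  have Ux : `]- (l / 2) - delta, l / 2 + delta[%classic x.
    by rewrite /= in_itv /=; move: t0J xt0; rewrite ltr_norml; lra.
  by have [? [? ?]] := Sg x Ux; split => // n; [exact: Sc | exact: Sa].
have [|e e0 meet_e] := meet_only_on_curve_segment regular.
  move=> t0 t1 t0J t1J ct t; suff -> : t0 = t1 by rewrite subrr addr0.
  by apply: inj; rewrite // inE; apply/inJ.
by exists e => [//|s t v w /inJ sJ /inJ tJ]; apply: meet_e.
Qed.

Lemma curve_data_meet closed l c alpha : curve_data closed l c alpha ->
  exists2 e : R, 0 < e & forall s t v w, Jset closed l s -> Jset closed l t ->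
    `|v| < e -> `|w| < e ->
    meet_only_on_curve c (normal_form c alpha) (dual_form c alpha) s t v w.
Proof.
case: closed => [/closed_curve_meet[e e0 meet_e]|/open_curve_meet //].
by exists e => [//|s t v w _ _]; apply: meet_e.
Qed.

Lemma curve_data_eqJ closed l c alpha : curve_data closed l c alpha ->
  forall s t, Jset closed l s -> Jset closed l t -> c s = c t -> eqJ closed l s t.
Proof.
case: closed => [[l0 [[per inj] _]] s t _ _|[_ [inj _]] s t sJ tJ].
  have pc : periodic c l by move=> x; case: (per x).
  by move=> /(periodic_injective_eq l0 pc inj)[k ->]; exists k.
by apply: inj; rewrite inE.
Qed.

End CurveData.

Section Origami.
Variable R : realType.
Notation V := 'rV[R]_3.

Lemma origami_embedding (J : set R) (EQ : R -> R -> Prop) (c : R -> V)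
    (F G : R -> R -> V) (e0 e1 : R) :
  0 < e0 -> 0 < e1 -> (forall s, F s 0 = c s) -> (forall s, G s 0 = c s) ->
  (forall p q, [set p | J p.1 /\ - e0 < p.2 < e0] p ->
     [set p | J p.1 /\ - e0 < p.2 < e0] q ->
     F p.1 p.2 = F q.1 q.2 -> EQ p.1 q.1 /\ p.2 = q.2) ->
  (forall s t, J s -> J t -> c s = c t -> EQ s t) ->
  (forall s t v w, J s -> J t -> `|v| < e1 -> `|w| < e1 ->
     meet_only_on_curve c F G s t v w) ->
  exists eps0 : R, 0 < eps0 /\ forall eps : R, 0 < eps < eps0 ->
    ((fun p => F p.1 p.2) @` [set p | J p.1 /\ - eps < p.2 < eps])
      `&` ((fun p => G p.1 p.2) @` [set p | J p.1 /\ - eps < p.2 < eps]) = c @` J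
    /\ (forall p q, [set p | J p.1 /\ - eps < p.2 < eps] p ->
          [set p | J p.1 /\ - eps < p.2 < eps] q ->
          (if 0 <= p.2 then F p.1 p.2 else G p.1 p.2) =
          (if 0 <= q.2 then F q.1 q.2 else G q.1 q.2) -> EQ p.1 q.1 /\ p.2 = q.2).
Proof.
move=> e00 e10 F0 G0 Finj ceq meet.
exists (Num.min e0 e1); split => [|eps /andP[eps0]]; first by rewrite lt_min e00.
rewrite lt_min => /andP[eps_e0 eps_e1].
have small v : - eps < v < eps -> - e0 < v < e0 /\ `|v| < e1.
  by rewrite -!ltr_norml => veps; rewrite !(lt_trans veps).
split.
- apply/seteqP; split => [x [[[s v] /= [Js /small[_ ve]] <-]] | x [s Js <-]].
    move=> [[t w] /= [Jt /small[_ we]] E].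
    have [v0 _] := (meet s t v w Js Jt ve we).1 (esym E).
    by exists s => //; rewrite v0 F0.
  have s0 : [set p | J p.1 /\ - eps < p.2 < eps] (s, 0) by rewrite /= oppr_lt0 eps0.
  by split; exists (s, 0); rewrite /= ?F0 ?G0.
- move=> [s v] [t w] /= [Js /small[v0 ve]] [Jt /small[w0 we]].
  have [meetF meetG] := meet s t v w Js Jt ve we.
  have [meetF' _] := meet t s w v Jt Js we ve.
  case: ifP => v_ge0; case: ifP => w_ge0 E.
  + exact: Finj (s, v) (t, w) (conj Js v0) (conj Jt w0) E.
  + by move: w_ge0; have [_ ->] := meetF E; rewrite lexx.
  + by move: v_ge0; have [_ ->] := meetF' (esym E); rewrite lexx.
  + by have [/(ceq _ _ Js Jt) ? ->] := meetG E.
Qed.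

End Origami.

Unset Implicit Arguments.

Theorem proposition2p21 (R : realType) (closed : bool) (l : R)
    (c : R -> 'rV[R]_3) (alpha : R -> R) :
  curve_data closed l c alpha ->
  embedding_germ closed l (normal_form c alpha) ->
  exists eps0 : R, 0 < eps0 /\
    forall eps : R, 0 < eps < eps0 ->
      ((fun p => normal_form c alpha p.1 p.2) @` Omega closed l eps)
        `&` ((fun p => dual_form c alpha p.1 p.2) @` Omega closed l eps)
        = c @` Jset closed l
      /\ (forall p q, Omega closed l eps p -> Omega closed l eps q ->
            origami c alpha p.1 p.2 = origami c alpha q.1 q.2 ->
            eqJ closed l p.1 q.1 /\ p.2 = q.2).
Proof.
move=> data [e0 [e00 [Finj _]]]; have [e1 e10 meet] := curve_data_meet data.
exact: origami_embedding e00 e10 (normal_form0 c alpha) (normal_form0 c _) Finj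
  (curve_data_eqJ data) meet.
Qed.
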